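(* For every $k\ge 1$, the bi-hypergraph obtained from $\mathcal H_{2k}$ by removing the edge $\{v_{2k,1},v_{2k,2},v_{2k,3}\}$ and adding the edges $\{v_{1,j},v_{2k,j+1},v_{2k,j+2}\}$ for all $j\in[3]$ is minimal uncolorable.
   Context: A bi-hypergraph $\mathcal H=(V,E)$ consists of a finite vertex set $V$ and a set $E$ of subsets of $V$, called edges, with no edge contained in another. A mapping $f:V\to\mathbb N$ is a proper coloring of $\mathcal H$ if $1<|f(e)|<|e|$ for every $e\in E$, where $f(e)=\{f(v):v\in e\}$. $\mathcal H$ is colorable if it has a proper coloring, and uncolorable otherwise. A subhypergraph of $\mathcal H$ is a bi-hypergraph $(V',E')$ with $V'\subseteq V$, $E'\subseteq E$; $\mathcal H$ is minimal uncolorable if it is uncolorable but every proper subhypergraph of it is colorable. For $k\ge 2$, $\mathcal H_k$ is the $3$-uniform bi-hypergraph with vertex set $\{v_{i,j}: i\in[k], j\in[3]\}$ (all distinct), with the convention $v_{i,4}=v_{i,1}$, $v_{i,5}=v_{i,2}$, whose edges are the sets $\{v_{i,1},v_{i,2},v_{i,3}\}$ for all $i\in[k]$ and the sets $\{v_{q+1,j},v_{q,j},v_{q,j+t}\}$ for all $q\in[k-1]$, $j\in[3]$, $t\in\{1,2\}$. *)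

From mathcomp Require Import all_boot.
Set Implicit Arguments. Unset Strict Implicit. Unset Printing Implicit Defensive.

Definition hgraph (T : finType) := ({set T} * {set {set T}})%type.

Definition bihypergraph (T : finType) (H : hgraph T) : Prop :=
  (forall e, e \in H.2 -> e \subset H.1) /\
  (forall e e', e \in H.2 -> e' \in H.2 -> e \subset e' -> e = e').

(* f : V -> nat is a proper coloring if 1 < |f(e)| < |e| for every edge e;
   |f(e)| is the number of distinct values of f on e.
   (Only the values of f on V matter, as edges are subsets of V.) *)
Definition proper_coloring (T : finType) (H : hgraph T) (f : T -> nat) : Prop :=
  forall e, e \in H.2 -> 1 < size (undup [seq f x | x in e]) < #|e|.

Definition colorable (T : finType) (H : hgraph T) : Prop :=
  exists f : T -> nat, proper_coloring H f.

Definition subhypergraph (T : finType) (H' H : hgraph T) : Prop :=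
  bihypergraph H' /\ H'.1 \subset H.1 /\ H'.2 \subset H.2.

Definition minimal_uncolorable (T : finType) (H : hgraph T) : Prop :=
  bihypergraph H /\ ~ colorable H /\
  (forall H', subhypergraph H' H -> H' <> H -> colorable H').

(* Vertices v_{i,j} are encoded (0-based) as pairs (i, j) : 'I_n * 'I_3;
   v_{i,1},v_{i,2},v_{i,3} correspond to j = 0,1,2 and j+t is taken mod 3. *)
Definition sh (j : 'I_3) (t : nat) : 'I_3 :=
  Ordinal (ltn_pmod (j + t) (isT : 0 < 3)).

Definition rowE (n : nat) (i : 'I_n) : {set 'I_n * 'I_3} :=
  [set (i, j) | j : 'I_3].

Definition Hn_edges (n : nat) : {set {set 'I_n * 'I_3}} :=
  [set rowE i | i : 'I_n] :|:
  [set E | [exists q : 'I_n, exists q' : 'I_n, exists j : 'I_3, exists t : 'I_3,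
     [&& val q' == (val q).+1, (val t == 1) || (val t == 2) &
         E == [set (q', j); (q, j); (q, sh j t)]]]].

Definition Hn (n : nat) : hgraph ('I_n * 'I_3)%type := (setT, Hn_edges n).

Definition Hn_mod_edges (n : nat) : {set {set 'I_n * 'I_3}} :=
  (Hn_edges n :\: [set rowE i | i in [pred i : 'I_n | val i == n.-1]]) :|:
  [set E | [exists i0 : 'I_n, exists i1 : 'I_n, exists j : 'I_3,
     [&& val i0 == 0, val i1 == n.-1 &
         E == [set (i0, j); (i1, sh j 1); (i1, sh j 2)]]]].

Definition Hn_mod (n : nat) : hgraph ('I_n * 'I_3)%type := (setT, Hn_mod_edges n).

From mathcomp Require Import all_boot zify.
Set Implicit Arguments. Unset Strict Implicit. Unset Printing Implicit Defensive.

(* Write m = 2k - 1, so the rows are 0, ..., m and only row m has lost its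
   row edge.  A proper coloring takes exactly two values on each row edge, so
   row 0 reads (a at column p, b at columns p+1 and p+2) with a <> b.  The
   link edges between rows q and q+1 force row q+1 to read the same with a and
   b swapped, as long as row q+1 still carries its row edge; and even without
   it they force row q+1 to take the value of column p of row q at columns
   p+1, p+2.  Since m - 1 is even, row m then has value a at columns p+1 and
   p+2, and the wrap edge {v_{0,p}, v_{m,p+1}, v_{m,p+2}} is monochromatic.
   For minimality, after deleting any single edge an explicit coloring by
   rows that single out one column and alternate with the row parity
   colors all remaining edges properly. *)

Section ProperTriple.
Variable T : eqType.

Definition proper3 (a b c : T) := 1 < size (undup [:: a; b; c]) < 3.

Lemma proper3E a b c : proper3 a b c = ((a == b) + (b == c) + (a == c) == 1).
Proof.
rewrite /proper3 /= !inE.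
case: (eqVneq a b) => [<-|ab]; case: (eqVneq a c) => [<-|ac];
  rewrite ?eqxx /= ?inE ?eqxx //=.
- by rewrite eq_sym (negbTE ab).
- by case: eqVneq.
Qed.

Lemma proper3_rot a b c : proper3 a b c = proper3 b c a.
Proof.
by rewrite !proper3E (eq_sym c a) (eq_sym b a); case: (a == b); case: (b == c); case: (a == c).
Qed.

Lemma proper3_xyy x y : proper3 x y y = (x != y).
Proof. by rewrite proper3E eqxx; case: (x == y). Qed.

Lemma proper3_eq_third (s a b : T) : a != b -> proper3 s b a -> s != b -> s = a.
Proof.
rewrite proper3E => ab + sb; rewrite (negbTE sb) /=; case: (eqVneq s a) => // sa.
by rewrite (eq_sym b) (negbTE ab).
Qed.

End ProperTriple.

Definition proper_on (T : finType) (f : T -> nat) (e : {set T}) :=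
  1 < size (undup [seq f x | x in e]) < #|e|.

Lemma eq_proper_on (T : finType) (f f' : T -> nat) e : f =1 f' -> proper_on f e = proper_on f' e.
Proof. by move=> ff'; rewrite /proper_on (eq_image (frefl _) ff'). Qed.

Lemma proper_on_seq (T : finType) (f : T -> nat) (s : seq T) : uniq s ->
  proper_on f [set:: s] = (1 < size (undup (map f s)) < size s).
Proof.
move=> us; rewrite /proper_on cardsE (card_uniqP us).
suff -> : size (undup [seq f x | x in [set:: s]]) = size (undup (map f s)) by [].
apply: perm_size; apply: uniq_perm; rewrite ?undup_uniq // => y.
by rewrite !mem_undup; apply: eq_mem_map => x; rewrite mem_enum inE.
Qed.

Definition o0 : 'I_3 := Ordinal (isT : 0 < 3).
Definition o1 : 'I_3 := Ordinal (isT : 1 < 3).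
Definition o2 : 'I_3 := Ordinal (isT : 2 < 3).

Ltac case_col j := case: j => [[|[|[|?]]] ?] //.

Lemma sh_1_1 p : sh (sh p 1) 1 = sh p 2. Proof. by apply/val_inj; case_col p. Qed.
Lemma sh_1_2 p : sh (sh p 1) 2 = p. Proof. by apply/val_inj; case_col p. Qed.
Lemma sh_2_1 p : sh (sh p 2) 1 = p. Proof. by apply/val_inj; case_col p. Qed.
Lemma sh_2_2 p : sh (sh p 2) 2 = sh p 1. Proof. by apply/val_inj; case_col p. Qed.
Lemma sh_neq (j t : 'I_3) : t != o0 -> sh j t != j.
Proof. by case_col j; case_col t. Qed.
Lemma sh_1_neq_2 (j : 'I_3) : sh j 1 != sh j 2.
Proof. by case_col j. Qed.
Lemma shift_nonzero (t : 'I_3) : ((val t == 1) || (val t == 2)) = (t != o0).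
Proof. by case_col t. Qed.

Lemma proper3_col_rot (T : eqType) (x : 'I_3 -> T) p :
  proper3 (x p) (x (sh p 1)) (x (sh p 2)) = proper3 (x o0) (x o1) (x o2).
Proof.
have E a b : val a = val b -> x a = x b by move=> /val_inj ->.
case: p => [[|[|[|?]]] lt_p3] //.
- by rewrite (E (sh _ 1) o1) // (E (sh _ 2) o2) // (E (Ordinal _) o0).
- by rewrite (E (sh _ 1) o2) // (E (sh _ 2) o0) // (E (Ordinal _) o1) // -proper3_rot.
- by rewrite (E (sh _ 1) o0) // (E (sh _ 2) o1) // (E (Ordinal _) o2) // proper3_rot.
Qed.

Lemma set_seq3 (T : finType) (a b c : T) : [set:: [:: a; b; c]] = [set a; b; c].
Proof. by apply/setP => x; rewrite !inE -orbA. Qed.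

Lemma rowE_seq n (i : 'I_n) : rowE i = [set:: [:: (i, o0); (i, o1); (i, o2)]].
Proof.
apply/setP => -[i' j]; rewrite /rowE !inE !xpair_eqE; apply/imsetP/idP.
  by move=> [j' _ [-> ->]]; rewrite eqxx /=; case_col j'.
by rewrite -!andb_orr => /andP[/eqP-> _]; exists j.
Qed.

Lemma mem_rowE n (i i' : 'I_n) j : ((i', j) \in rowE i) = (i' == i).
Proof. by rewrite rowE_seq !inE !xpair_eqE -!andb_orr; case_col j; rewrite andbT. Qed.

Lemma rowE_inj n : injective (@rowE n).
Proof.
move=> i i' E; have : (i, o0) \in rowE i' by rewrite -E mem_rowE.
by rewrite mem_rowE => /eqP.
Qed.

(* Edges of [Hn_mod m.+1] named by 0-based row indices in [nat]; [label_edge]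
   casts them with [inord], which is faithful only for valid labels. *)
Inductive edge_label := Row of nat | Link of nat & 'I_3 & 'I_3 | Wrap of 'I_3.

Definition label_valid (m : nat) (l : edge_label) : bool :=
  match l with
  | Row i => i < m
  | Link q _ t => (q < m) && (t != o0)
  | Wrap _ => true
  end.

Definition label_triple (m : nat) (l : edge_label) : seq ('I_m.+1 * 'I_3) :=
  match l with
  | Row i => [:: (inord i, o0); (inord i, o1); (inord i, o2)]
  | Link q j t => [:: (inord q.+1, j); (inord q, j); (inord q, sh j t)]
  | Wrap j => [:: (inord 0, j); (inord m, sh j 1); (inord m, sh j 2)]
  end.

Definition label_edge (m : nat) (l : edge_label) := [set:: label_triple m l].

Lemma label_edgeP m e :
  e \in Hn_mod_edges m.+1 <-> exists2 l, label_valid m l & e = label_edge m l.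
Proof.
rewrite /label_edge; split.
  rewrite /Hn_mod_edges /Hn_edges !inE => /orP[/andP[notlast /orP[/imsetP[i _ Ee]|]]|].
  - subst e; exists (Row i); last by rewrite /= inord_val rowE_seq.
    rewrite /= ltn_neqAle -ltnS ltn_ord andbT; apply: contraNneq notlast => Ei.
    by apply/imsetP; exists i; rewrite // unfold_in /= Ei.
  - case/existsP=> q /existsP[q' /existsP[j /existsP[t /and3P[/eqP qq' t0 /eqP ->]]]].
    exists (Link q j t); first by rewrite /= -ltnS -qq' ltn_ord -shift_nonzero.
    by rewrite /= set_seq3 -qq' !inord_val.
  - case/existsP=> i0 /existsP[i1 /existsP[j /and3P[/eqP i00 /eqP i1m /eqP ->]]].
    exists (Wrap j); rewrite //= set_seq3.
    by congr [set (_, _); (_, _); (_, _)]; apply/val_inj; rewrite /= inordK.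
case=> -[i|q j t|j] /= valid ->; rewrite /Hn_mod_edges /Hn_edges !inE.
- apply/orP; left; rewrite -rowE_seq; apply/andP; split; last by rewrite imset_f.
  apply/imsetP => -[i' /[!inE] /eqP i'm /rowE_inj Ei].
  move: i'm; rewrite -Ei /= inordK ?(leqW valid) // => i_eq; by move: valid; rewrite i_eq ltnn.
- case/andP: valid => qm t0; apply/orP; left; rewrite set_seq3; apply/andP; split.
    apply/imsetP => -[i' _ E].
    have : ((inord q.+1, j) \in rowE i') && ((inord q, j) \in rowE i').
      by rewrite -E !inE !eqxx ?orbT.
    rewrite !mem_rowE => /andP[/eqP <- /eqP/(congr1 val)].
    by rewrite /= !inordK; lia.
  apply/orP; right; apply/existsP; exists (inord q); apply/existsP; exists (inord q.+1).
  apply/existsP; exists j; apply/existsP; exists t.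
  by rewrite shift_nonzero t0 eqxx andbT; apply/eqP; rewrite /= !inordK; lia.
- apply/orP; right; apply/existsP; exists (inord 0); apply/existsP; exists (inord m).
  apply/existsP; exists j; rewrite set_seq3 eqxx !andbT.
  by apply/andP; split; apply/eqP; rewrite /= inordK.
Qed.

Lemma uniq_label_triple m l : 0 < m -> label_valid m l -> uniq (label_triple m l).
Proof.
have inordF i i' : i <= m -> i' <= m -> i != i' -> ((inord i : 'I_m.+1) == inord i') = false.
  by move=> ? ? ?; apply/negbTE/eqP => /(congr1 val) /=; rewrite !inordK //; lia.
move=> m0; case: l => [i|q j t|j] /=.
- by move=> _; rewrite !inE !xpair_eqE !eqxx !andbF.
- case/andP=> qm t0; rewrite !inE !xpair_eqE inordF; try lia.
  by rewrite !eqxx eq_sym (negbTE (sh_neq j t0)).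
- by move=> _; rewrite !inE !xpair_eqE inordF ?(negbTE (sh_1_neq_2 j)) ?andbF; try lia.
Qed.

Lemma card_label_edge m l : 0 < m -> label_valid m l -> #|label_edge m l| = 3.
Proof. by move=> m0 lv; rewrite cardsE (card_uniqP (uniq_label_triple m0 lv)); case: l lv. Qed.

Definition label_ok (m : nat) (g : nat -> 'I_3 -> nat) (l : edge_label) : bool :=
  match l with
  | Row i => proper3 (g i o0) (g i o1) (g i o2)
  | Link q j t => proper3 (g q.+1 j) (g q j) (g q (sh j t))
  | Wrap j => proper3 (g 0 j) (g m (sh j 1)) (g m (sh j 2))
  end.

Lemma proper_on_label_edge m (g : nat -> 'I_3 -> nat) l : 0 < m -> label_valid m l ->
  proper_on (fun x : 'I_m.+1 * 'I_3 => g x.1 x.2) (label_edge m l) = label_ok m g l.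
Proof.
move=> m0 lv; rewrite proper_on_seq ?uniq_label_triple //.
by case: l lv => [i|q j t|j] /= => [im|/andP[qm _]|_]; rewrite !inordK //; lia.
Qed.

Definition row_split (g : nat -> 'I_3 -> nat) i p a b :=
  [/\ g i p = a, g i (sh p 1) = b & g i (sh p 2) = b].

Lemma proper3_row_split (g : nat -> 'I_3 -> nat) i :
  proper3 (g i o0) (g i o1) (g i o2) -> exists p a b, a != b /\ row_split g i p a b.
Proof.
have E a b : val a = val b -> g i a = g i b by move=> /val_inj ->.
rewrite proper3E.
case: (eqVneq (g i o0) (g i o1)) => g01; case: (eqVneq (g i o1) (g i o2)) => g12;
  case: (eqVneq (g i o0) (g i o2)) => g02 //= _.
- exists o2, (g i o2), (g i o0); split; first by rewrite eq_sym.
  by split; [|apply: E|rewrite g01; apply: E].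
- exists o0, (g i o0), (g i o1); split=> //.
  by split; [|apply: E|rewrite g12; apply: E].
- exists o1, (g i o1), (g i o2); split=> //.
  by split; [|apply: E|rewrite -g02; apply: E].
Qed.

Section Uncolorable.
Variables (m : nat) (g : nat -> 'I_3 -> nat).
Hypothesis g_ok : forall l, label_valid m l -> label_ok m g l.

Lemma link_forced q c (s s' : 'I_3) a b : q < m -> s != o0 -> s' != o0 -> a != b ->
  g q c = b -> g q (sh c s) = b -> g q (sh c s') = a -> g q.+1 c = a.
Proof.
move=> qm s0 s'0 ab gc gs gs'.
have := @g_ok (Link q c s'); rewrite /= qm s'0 gc gs' => /(_ isT)/(proper3_eq_third ab); apply.
by have := @g_ok (Link q c s); rewrite /= qm s0 gc gs proper3_xyy => /(_ isT).
Qed.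

Lemma link_row_split q p a b : q < m -> a != b -> row_split g q p a b ->
  g q.+1 (sh p 1) = a /\ g q.+1 (sh p 2) = a.
Proof.
move=> qm ab [gp gp1 gp2]; split.
- by apply: (@link_forced _ _ o1 o2 _ b); rewrite ?sh_1_1 ?sh_1_2.
- by apply: (@link_forced _ _ o2 o1 _ b); rewrite ?sh_2_1 ?sh_2_2.
Qed.

Lemma next_row_split q p a b : q.+1 < m -> a != b -> row_split g q p a b -> row_split g q.+1 p b a.
Proof.
move=> q1m ab split_q; have qm : q < m by apply: ltnW.
have [gp1' gp2'] := link_row_split qm ab split_q; case: split_q => gp gp1 _.
split=> //; apply: (@proper3_eq_third _ _ b a); first by rewrite eq_sym.
  by have := @g_ok (Link q p o1); rewrite /= qm gp gp1 => /(_ isT).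
have := @g_ok (Row q.+1); rewrite /= q1m -(proper3_col_rot (g q.+1) p) gp1' gp2' proper3_xyy.
by move/(_ isT).
Qed.

Lemma alternating_row_split p a b : a != b -> row_split g 0 p a b ->
  forall i, i < m -> row_split g i p (if odd i then b else a) (if odd i then a else b).
Proof.
move=> ab split0; elim=> [//|i IH i1m].
have := next_row_split i1m _ (IH (ltnW i1m)).
by rewrite /=; case: (odd i) => next; apply: next; rewrite // eq_sym.
Qed.

Lemma no_odd_coloring : ~~ odd m.
Proof.
apply/negP => om; have [m' mE] : exists m', m = m'.+1 by case: (m) om => // m'; exists m'.
have even_m' : odd m' = false by move: om; rewrite mE => /negbTE.
have m'm : m' < m by rewrite mE.
have [p [a [b [ab split0]]]] := proper3_row_split (@g_ok (Row 0) ltac:(by rewrite mE)).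
have := alternating_row_split ab split0 m'm; rewrite even_m'.
move=> /(link_row_split m'm ab); rewrite -mE => -[gp1 gp2].
have := @g_ok (Wrap p) isT; rewrite /= gp1 gp2; case: split0 => -> _ _.
by rewrite proper3_xyy eqxx.
Qed.
End Uncolorable.

Definition stripe (c : nat) (p : 'I_3) (b : bool) (j : 'I_3) : nat :=
  c + (if j == p then b else ~~ b).

Lemma stripe_ge c p b j : c <= stripe c p b j.
Proof. exact: leq_addr. Qed.

Lemma stripe0_le1 p b j : stripe 0 p b j <= 1.
Proof. by rewrite /stripe; case: (j == p); case: b. Qed.

Lemma proper3_stripe c p b : proper3 (stripe c p b o0) (stripe c p b o1) (stripe c p b o2).
Proof. by rewrite /stripe proper3E !eqn_add2l; case_col p; case: b. Qed.

Lemma proper3_stripe_link c p b j (t : 'I_3) : t != o0 ->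
  proper3 (stripe c p (~~ b) j) (stripe c p b j) (stripe c p b (sh j t)).
Proof. by rewrite /stripe proper3E !eqn_add2l; case_col p; case_col j; case_col t; case: b. Qed.

Lemma proper3_const_stripe_link c p (b : bool) j (t : 'I_3) : t != o0 ->
  proper3 (c + b) (stripe c p b j) (stripe c p b (sh j t)).
Proof. by rewrite /stripe proper3E !eqn_add2l; case_col p; case_col j; case_col t; case: b. Qed.

Lemma proper3_stripe_turn j0 t0 b j (t : 'I_3) : t0 != o0 -> t != o0 -> (j, t) != (j0, t0) ->
  proper3 (stripe 0 j0 (~~ b) j)
          (stripe 0 (sh j0 (3 - t0)) b j) (stripe 0 (sh j0 (3 - t0)) b (sh j t)).
Proof.
by rewrite /stripe proper3E xpair_eqE; case_col j0; case_col t0; case_col j; case_col t; case: b.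
Qed.

Lemma proper3_stripe_wrap j0 j : j != j0 ->
  proper3 (stripe 0 j0 false j) (stripe 0 j0 true (sh j 1)) (stripe 0 j0 true (sh j 2)).
Proof. by rewrite /stripe proper3E; case_col j0; case_col j. Qed.

Lemma proper3_stripe_turn_wrap j0 t0 j : t0 != o0 ->
  proper3 (stripe 0 (sh j0 (3 - t0)) false j)
          (stripe 0 j0 true (sh j 1)) (stripe 0 j0 true (sh j 2)).
Proof. by rewrite /stripe proper3E; case_col j0; case_col t0; case_col j. Qed.

(* Row i0 may be constant once its row edge is gone; the stripes before and
   after it use the disjoint value sets {0, 1} and {2, 3}, and the constant
   last row turns every wrap edge into (x, 2, 2) with x <= 1. *)
Definition coloring_without_row (m i0 i : nat) : 'I_3 -> nat :=
  if i < i0 then stripe 0 o0 (odd i)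
  else if i == i0 then fun=> nat_of_bool (~~ odd i0)
  else if i < m then stripe 2 o0 (odd i)
  else fun=> 2.

Lemma coloring_without_row_ok m i0 l : odd m -> i0 < m -> label_valid m l -> l <> Row i0 ->
  label_ok m (coloring_without_row m i0) l.
Proof.
rewrite /coloring_without_row => om i0m; case: l => [i|q j t|j] /=.
- move=> im i_i0; have {}i_i0 : i != i0 by apply: contra_not_neq i_i0 => ->.
  case: ltnP => _; first exact: proper3_stripe.
  by rewrite (negbTE i_i0) im; apply: proper3_stripe.
- case/andP=> qm t0 _; case: (ltngtP q.+1 i0) => [_|i0q1|<-] /=.
  + exact: proper3_stripe_link.
  + rewrite qm; case: eqVneq => [->|q_i0].
      rewrite proper3_xyy; apply: contraTneq (leq_b1 (~~ odd i0)) => <-.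
      by case: ifP => _; rewrite // -ltnNge (leq_trans _ (stripe_ge _ _ _ _)).
    case: ifP => [_|q1m]; first exact: proper3_stripe_link.
    have -> : odd q = false by move: om; rewrite (_ : m = q.+1) /=; [case: (odd q) | lia].
    by have := proper3_const_stripe_link 2 o0 false j t0; rewrite addn0.
  + by have := proper3_const_stripe_link 0 o0 (odd q) j t0; rewrite negbK.
- move=> _ _; rewrite [m < i0]ltnNge (ltnW i0m) (gtn_eqF i0m) ltnn /= proper3_xyy.
  have [-> //|i0_pos] := posnP i0.
  by apply: contraTneq (stripe0_le1 o0 false j) => ->.
Qed.

(* The singled-out column moves from j0 - t0 to j0 after row q0, which
   breaks only the link edge {v_{q0+1,j0}, v_{q0,j0}, v_{q0,j0+t0}}. *)
Definition coloring_without_link (q0 : nat) (j0 t0 : 'I_3) (i : nat) : 'I_3 -> nat :=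
  if i <= q0 then stripe 0 (sh j0 (3 - t0)) (odd i) else stripe 0 j0 (odd i).

Lemma coloring_without_link_ok m q0 j0 t0 l : odd m -> label_valid m (Link q0 j0 t0) ->
  label_valid m l -> l <> Link q0 j0 t0 -> label_ok m (coloring_without_link q0 j0 t0) l.
Proof.
rewrite /coloring_without_link => om /andP[q0m t00]; case: l => [i|q j t|j] /=.
- by move=> _ _; case: ifP => _; apply: proper3_stripe.
- case/andP=> _ t_0 ne; case: (ltngtP q q0) ne => [_|_|->] ne; try exact: proper3_stripe_link.
  apply: proper3_stripe_turn => //; apply: contra_not_neq ne.
  by case=> -> ->.
- by move=> _ _; rewrite leqNgt q0m om; apply: proper3_stripe_turn_wrap.
Qed.

Definition coloring_without_wrap (j0 : 'I_3) (i : nat) : 'I_3 -> nat := stripe 0 j0 (odd i).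

Lemma coloring_without_wrap_ok m j0 l : odd m -> label_valid m l -> l <> Wrap j0 ->
  label_ok m (coloring_without_wrap j0) l.
Proof.
rewrite /coloring_without_wrap => om; case: l => [i|q j t|j] /=.
- by move=> _ _; apply: proper3_stripe.
- by case/andP=> _ t0 _; apply: proper3_stripe_link.
- move=> _ ne; rewrite om; apply: proper3_stripe_wrap.
  by apply: contra_not_neq ne => ->.
Qed.

Lemma colorable_without_label m l0 : odd m -> label_valid m l0 ->
  exists g, forall l, label_valid m l -> l <> l0 -> label_ok m g l.
Proof.
move=> om; case: l0 => [i0|q0 j0 t0|j0] l0v.
- by exists (coloring_without_row m i0) => l; apply: coloring_without_row_ok.
- by exists (coloring_without_link q0 j0 t0) => l; apply: coloring_without_link_ok.
- by exists (coloring_without_wrap j0) => l; apply: coloring_without_wrap_ok.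
Qed.

Lemma Hn_mod_uncolorable m : odd m -> ~ colorable (Hn_mod m.+1).
Proof.
move=> om [f f_proper]; have m_pos : 0 < m by case: (m) om.
pose g i j := f (inord i, j).
have gf : (fun x : 'I_m.+1 * 'I_3 => g x.1 x.2) =1 f by move=> [i j]; rewrite /g inord_val.
suff /no_odd_coloring : forall l, label_valid m l -> label_ok m g l by rewrite om.
move=> l lv; rewrite -proper_on_label_edge // (eq_proper_on _ gf).
by apply: f_proper; apply/label_edgeP; exists l.
Qed.

Lemma Hn_mod_bihypergraph m : 0 < m -> bihypergraph (Hn_mod m.+1).
Proof.
move=> m_pos; split=> [e _|e e']; first exact: subsetT.
move=> /label_edgeP[l lv ->] /label_edgeP[l' l'v ->] sub.
by apply/eqP; rewrite eqEcard sub !card_label_edge.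
Qed.

Lemma Hn_mod_edges_cover m (x : 'I_m.+1 * 'I_3) : exists2 e, e \in Hn_mod_edges m.+1 & x \in e.
Proof.
case: x => i j; have [im|mi] := ltnP i m.
  exists (label_edge m (Row i)); first by apply/label_edgeP; exists (Row i).
  by rewrite /label_edge /= inord_val -rowE_seq mem_rowE.
exists (label_edge m (Wrap (sh j 2))); first by apply/label_edgeP; exists (Wrap (sh j 2)).
have -> : i = inord m by apply/val_inj; rewrite /= inordK //; have := ltn_ord i; lia.
by rewrite !inE sh_2_1 eqxx orbT.
Qed.

Lemma Hn_mod_proper_sub_colorable m H : odd m ->
  subhypergraph H (Hn_mod m.+1) -> H <> Hn_mod m.+1 -> colorable H.
Proof.
case: H => V E om [[edges_in_V _] [/= _ sub_E]] neq.
have [all_E|/subsetPn[_ /label_edgeP[l0 l0v ->] l0_notin]] := boolP (Hn_mod_edges m.+1 \subset E).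
  have E_eq : E = Hn_mod_edges m.+1 by apply/eqP; rewrite eqEsubset sub_E.
  case: neq; rewrite /Hn_mod E_eq; congr pair; apply/setP => x; rewrite inE.
  have [e e_in x_in] := Hn_mod_edges_cover x.
  by apply: (subsetP (edges_in_V e _)); rewrite //= E_eq.
have [g g_ok] := colorable_without_label om l0v.
exists (fun x : 'I_m.+1 * 'I_3 => g x.1 x.2) => e /= e_in.
have /label_edgeP[l lv e_eq] := subsetP sub_E e e_in; subst e.
rewrite -/(proper_on _ _) proper_on_label_edge; [|by case: (m) om|by []]; apply: g_ok => // l_l0.
by move: e_in l0_notin; rewrite l_l0 => ->.
Qed.

Theorem mainTheorem15 (k : nat) : 1 <= k -> minimal_uncolorable (Hn_mod (2 * k)).
Proof.
move=> k_pos; have -> : 2 * k = (2 * k).-1.+1 by lia.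
have odd_m : odd (2 * k).-1 by case: k k_pos => // k _; rewrite mulnS /= mul2n odd_double.
split; [apply: Hn_mod_bihypergraph; lia | split].
- exact: Hn_mod_uncolorable.
- by move=> H; apply: Hn_mod_proper_sub_colorable.
Qed.
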